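(* Let $\Gamma$ be a hyperbolic group with finite generating set $S$ and let $A$ be a subgroup of $\Gamma$ containing a free subgroup of rank two. There are $\alpha\geqslant0$ and $a_1,a_2\in A$ such that $$|\gamma|_S\leqslant 3\max\{l_S(\gamma),l_S(a_1\gamma),l_S(a_2\gamma)\}+\alpha\quad\text{for all }\gamma\in\Gamma.$$
   Context: $|\gamma|_S$ is the word length and $l_S(\gamma)=\min_{g\in\Gamma}|g\gamma g^{-1}|_S$ the translation length of $\gamma$ on the Cayley graph $C_S(\Gamma)$. *)

From Stdlib Require Import Reals List ClassicalEpsilon.
Set Implicit Arguments.

Record Grp := {
  carrier :> Type;
  gmul : carrier -> carrier -> carrier;
  ginv : carrier -> carrier;
  gone : carrier;
  gmulA : forall x y z, gmul x (gmul y z) = gmul (gmul x y) z;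
  gmul1 : forall x, gmul gone x = x;
  gmulV : forall x, gmul (ginv x) x = gone
}.
Arguments gmul {_}.
Arguments ginv {_}.

Local Open Scope R_scope.
Section GroupDefs.
Variable G : Grp.
Variable S : list G.

Definition wprod (w : list G) : G := fold_right (@gmul G) (@gone G) w.

Definition is_word (w : list G) : Prop :=
  Forall (fun x => In x S \/ In (ginv x) S) w.

Definition generates : Prop :=
  forall g : G, exists w, is_word w /\ wprod w = g.

Definition is_least (P : nat -> Prop) (n : nat) : Prop :=
  P n /\ forall m, P m -> (n <= m)%nat.

Definition word_length (g : G) : nat :=
  epsilon (inhabits 0%nat)
    (is_least (fun n => exists w, is_word w /\ length w = n /\ wprod w = g)).

Definition transl_length (g : G) : nat :=
  epsilon (inhabits 0%nat)
    (is_least (fun n => exists h : G,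
        word_length (gmul (gmul h g) (ginv h)) = n)).

(* word metric (metric of the Cayley graph restricted to vertices) *)
Definition word_dist (x y : G) : R := INR (word_length (gmul (ginv x) y)).

Definition gromov_prod (w x y : G) : R :=
  (word_dist w x + word_dist w y - word_dist x y) / 2.

Definition hyperbolic_wrt : Prop :=
  exists delta : R, 0 <= delta /\
    forall w x y z : G,
      gromov_prod w x z >= Rmin (gromov_prod w x y) (gromov_prod w y z) - delta.
End GroupDefs.

Definition is_subgroup (G : Grp) (A : G -> Prop) : Prop :=
  A (gone G) /\ (forall x y, A x -> A y -> A (gmul x y)) /\
  (forall x, A x -> A (ginv x)).

(* reduced words in two letters: (which generator, sign) *)
Fixpoint reduced2 (w : list (bool * bool)) : Prop :=
  match w with
  | x :: ((y :: _) as t) => ~ (fst x = fst y /\ snd x <> snd y) /\ reduced2 t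
  | _ => True
  end.

Definition eval2 (G : Grp) (a b : G) (w : list (bool * bool)) : G :=
  @wprod G (map (fun l : bool * bool =>
     let x := if fst l then a else b in if snd l then x else ginv x) w).

Definition free_pair (G : Grp) (a b : G) : Prop :=
  forall w, w <> nil -> reduced2 w -> @eval2 G a b w <> gone G.

Definition contains_free_rank2 (G : Grp) (A : G -> Prop) : Prop :=
  exists a b, A a /\ A b /\ @free_pair G a b.

Arguments generates {G} S.
Arguments hyperbolic_wrt {G} S.
Arguments word_length {G} S g.
Arguments transl_length {G} S g.
Arguments is_subgroup {G} A.
Arguments contains_free_rank2 {G} A.

(* Let D be an integer four-point constant for twice the Gromov product.  Translation
   lengths of the powers of an element a of infinite order are unbounded: otherwise the
   midpoint of a geodesic from p to a^K p is moved boundedly by both a and a^K, so a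
   conjugate c of a and its power c^K lie in fixed balls, which bounds K.  Hence some
   conjugate y of a power of a is straight: (y^-1 | y)_1 <= 2D and |y| > 8D + 2, and the
   powers of y form a uniform quasi-geodesic.  If b generates a free subgroup with a and
   x is the corresponding conjugate of b, then for N large and some j <= 5 all products
   (e1 | e2)_1 with e1 = y^±N and e2 = (x^j y^N x^-j)^±1 are small; otherwise, by
   pigeonhole on the conjugates y^-n u y^n, a power of y would commute with a power of x.
   For such b1, b2 a long g either lies near its own axis, so that |g| <= 3 l(g) + 6D, or
   is transverse to some b_i, and then 1, b_i, b_i g, b_i g b_i, b_i g b_i g is a
   quasi-geodesic, so that |g| <= l(b_i g) + C.  Conjugating back produces a1, a2 in A. *)

From Stdlib Require Import Reals List Lia ZArith ClassicalEpsilon Classical Wf_nat Lra.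

Lemma pigeonhole {T : Type} (f : nat -> T) (l : list T) M :
  (forall n, (n <= M)%nat -> In (f n) l) -> (length l <= M)%nat ->
  exists n1 n2, (n1 < n2 <= M)%nat /\ f n1 = f n2.
Proof.
  intros Hin Hlen. apply NNPP. intros Hinj.
  assert (Hnodup : forall a n, (a + n <= S M)%nat -> NoDup (map f (seq a n))).
  { intros a n. revert a. induction n as [|n IH]; intros a Ha; simpl; constructor.
    - intros Hi. apply in_map_iff in Hi. destruct Hi as [j [Ej Ij]]. apply in_seq in Ij.
      apply Hinj. exists a, j. split; [lia | auto].
    - apply IH. lia. }
  assert (Hincl : incl (map f (seq 0 (S M))) l).
  { intros z Hz. apply in_map_iff in Hz. destruct Hz as [j [<- Ij]]. apply in_seq in Ij.
    apply Hin. lia. }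
  assert (H := NoDup_incl_length (Hnodup 0%nat (S M) ltac:(lia)) Hincl).
  rewrite length_map, length_seq in H. lia.
Qed.

Lemma is_least_exists (P : nat -> Prop) : (exists n, P n) -> exists n, is_least P n.
Proof.
  intros H.
  destruct (dec_inh_nat_subset_has_unique_least_element P (fun n => classic (P n)) H)
    as [n [Hn _]].
  exists n. exact Hn.
Qed.

Section HyperbolicGroup.
Context {G : Grp}.
Local Notation "x ** y" := (@gmul G x y) (at level 40, left associativity).
Local Notation one := (gone G).
Local Notation inv := (@ginv G).

(** * Group identities and powers *)

Lemma mulgA x y z : x ** (y ** z) = x ** y ** z. Proof. apply gmulA. Qed.
Lemma mul1g x : one ** x = x. Proof. apply gmul1. Qed.
Lemma mulVg x : inv x ** x = one. Proof. apply gmulV. Qed.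

Lemma mulKg x y : inv x ** (x ** y) = y.
Proof. rewrite mulgA, mulVg, mul1g. reflexivity. Qed.

Lemma invgK_mulg1 x : inv (inv x) ** one = x.
Proof. rewrite <- (mulVg x), mulgA, mulVg, mul1g. reflexivity. Qed.

Lemma mulg1 x : x ** one = x.
Proof.
  rewrite <- (invgK_mulg1 x) at 1. rewrite <- mulgA, mul1g. apply invgK_mulg1.
Qed.

Lemma invgK x : inv (inv x) = x.
Proof. rewrite <- (mulg1 (inv (inv x))). apply invgK_mulg1. Qed.

Lemma mulgV x : x ** inv x = one.
Proof. rewrite <- (invgK x) at 1. apply mulVg. Qed.

Lemma mulKVg x y : x ** (inv x ** y) = y.
Proof. rewrite mulgA, mulgV, mul1g. reflexivity. Qed.

Lemma mulgK x y : x ** y ** inv y = x.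
Proof. rewrite <- mulgA, mulgV, mulg1. reflexivity. Qed.

Lemma mulgKV x y : x ** inv y ** y = x.
Proof. rewrite <- mulgA, mulVg, mulg1. reflexivity. Qed.

Lemma invg_unique x y : x ** y = one -> inv x = y.
Proof. intros H. rewrite <- (mulg1 (inv x)), <- H, mulKg. reflexivity. Qed.

Lemma invgM x y : inv (x ** y) = inv y ** inv x.
Proof.
  apply invg_unique. rewrite <- mulgA, (mulgA y), mulgV, mul1g, mulgV. reflexivity.
Qed.

Lemma invg1 : inv one = one.
Proof. apply invg_unique, mul1g. Qed.

Lemma mulgI x y z : x ** y = x ** z -> y = z.
Proof. intros H. rewrite <- (mulKg x y), H, mulKg. reflexivity. Qed.

Lemma mulIg x y z : y ** x = z ** x -> y = z.
Proof. intros H. rewrite <- (mulgK y x), H, mulgK. reflexivity. Qed.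

Lemma commute_invl z x : inv z ** x = x ** inv z -> z ** x = x ** z.
Proof.
  intros E. rewrite <- (mulgKV (z ** x) z), <- (mulgA z x (inv z)), <- E, mulKVg.
  reflexivity.
Qed.

Fixpoint gpow (g : G) (n : nat) : G :=
  match n with 0 => one | S n => g ** gpow g n end.

Lemma gpowD g m n : gpow g (m + n) = gpow g m ** gpow g n.
Proof.
  induction m as [|m IH]; simpl; [rewrite mul1g | rewrite IH, mulgA]; reflexivity.
Qed.

Lemma gpowSr g n : gpow g (S n) = gpow g n ** g.
Proof. rewrite <- Nat.add_1_r, gpowD. simpl. rewrite mulg1. reflexivity. Qed.

Lemma gpow1 g : gpow g 1 = g.
Proof. apply mulg1. Qed.

Lemma gpow_commute g n : g ** gpow g n = gpow g n ** g.
Proof. apply gpowSr. Qed.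

Lemma gpowB g n N : (n <= N)%nat -> gpow g N = gpow g n ** gpow g (N - n).
Proof. intros H. rewrite <- gpowD. f_equal. lia. Qed.

Lemma gpow_mulV_sub g k N : (k <= N)%nat -> gpow g N ** inv (gpow g (N - k)) = gpow g k.
Proof. intros H. rewrite (@gpowB g k N H), mulgK. reflexivity. Qed.

Lemma gpowV g n : gpow (inv g) n = inv (gpow g n).
Proof.
  induction n as [|n IH]; simpl; [rewrite invg1 | rewrite IH, <- invgM, <- gpowSr];
  reflexivity.
Qed.

Lemma gpowJ h g n : gpow (h ** g ** inv h) n = h ** gpow g n ** inv h.
Proof.
  induction n as [|n IH]; simpl; [rewrite mulg1, mulgV; reflexivity|].
  rewrite IH, <- !mulgA, (mulgA (inv h) h), mulVg, mul1g. reflexivity.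
Qed.

Lemma gpowM g m n : gpow g (m * n) = gpow (gpow g m) n.
Proof.
  induction n as [|n IH]; simpl; [rewrite Nat.mul_0_r; reflexivity|].
  rewrite <- IH, <- gpowD. f_equal. lia.
Qed.

Lemma gpow_inj c i j : (forall n, gpow c (S n) <> one) -> gpow c i = gpow c j -> i = j.
Proof.
  intros Hc E.
  assert (Hlt : forall i j, (i < j)%nat -> gpow c i <> gpow c j).
  { intros i' j' Hij E'. rewrite (@gpowB c i' j' ltac:(lia)) in E'.
    replace (j' - i')%nat with (S (j' - i' - 1)) in E' by lia.
    apply (Hc (j' - i' - 1)%nat). symmetry. apply (mulgI (gpow c i')).
    rewrite mulg1. exact E'. }
  destruct (Nat.lt_total i j) as [H|[H|H]]; auto.
  - contradiction (Hlt i j H).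
  - symmetry in E. contradiction (Hlt j i H).
Qed.

Lemma powers_in_list_bounded c (L : list G) : (forall n, gpow c (S n) <> one) ->
  exists M, forall k, In (gpow c k) L -> (k <= M)%nat.
Proof.
  intros Hc. induction L as [|x L [M HM]].
  - exists 0%nat. intros k [].
  - destruct (classic (exists k0, gpow c k0 = x)) as [[k0 Hk0]|Hx].
    + exists (Nat.max k0 M). intros k [Hk|Hk].
      * rewrite <- Hk0 in Hk. apply gpow_inj in Hk; auto. lia.
      * specialize (HM k Hk). lia.
    + exists M. intros k [Hk|Hk]; auto. exfalso; eauto.
Qed.

Lemma powers_in_list_bounded_uniform (Lc L : list G) : exists M,
  forall c, In c Lc -> (forall n, gpow c (S n) <> one) ->
  forall k, In (gpow c k) L -> (k <= M)%nat.
Proof.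
  induction Lc as [|c Lc [M HM]].
  - exists 0%nat. intros c [].
  - destruct (classic (forall n, gpow c (S n) <> one)) as [Hc|Hc].
    + destruct (powers_in_list_bounded c L Hc) as [M1 HM1]. exists (Nat.max M M1).
      intros c' [<-|I] Hc' k Hk; [specialize (HM1 k Hk) | specialize (HM c' I Hc' k Hk)]; lia.
    + exists M. intros c' [<-|I] Hc' k Hk; [contradiction | eauto].
Qed.

Lemma conj_eq_commute a b u : inv a ** u ** a = inv (b ** a) ** u ** (b ** a) -> b ** u = u ** b.
Proof.
  rewrite invgM, <- !mulgA. intros E. apply mulgI in E.
  rewrite !mulgA in E. apply mulIg in E.
  rewrite E at 1. rewrite !mulgA, mulgV, mul1g. reflexivity.
Qed.

Definition signed (y : G) (s : bool) : G := if s then y else inv y.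

Lemma subgroup_gpow (A : G -> Prop) z n : is_subgroup A -> A z -> A (gpow z n).
Proof. intros [H1 [H2 _]] Hz. induction n; simpl; auto. Qed.

Lemma subgroup_conj (A : G -> Prop) h z : is_subgroup A -> A h -> A z -> A (h ** z ** inv h).
Proof. intros (_ & Hmul & Hinv) Hh Hz. auto. Qed.

(** * Free pairs *)

Lemma wprod_app (w1 w2 : list G) : wprod G (w1 ++ w2) = wprod G w1 ** wprod G w2.
Proof.
  induction w1 as [|x w1 IH]; simpl; [rewrite mul1g | rewrite IH, mulgA]; reflexivity.
Qed.

Definition letters_compatible (x y : bool * bool) := ~ (fst x = fst y /\ snd x <> snd y).

Lemma reduced2_repeat_app x n l : reduced2 l ->
  (match l with nil => True | y :: _ => letters_compatible x y end) ->
  reduced2 (repeat x n ++ l).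
Proof.
  intros Hl Hc. induction n as [|[|n] IH]; simpl in *; auto.
  - destruct l; simpl; auto.
  - unfold letters_compatible in *. split; [tauto | exact IH].
Qed.

Lemma eval2_app a b w1 w2 : eval2 G a b (w1 ++ w2) = eval2 G a b w1 ** eval2 G a b w2.
Proof. unfold eval2. rewrite map_app. apply wprod_app. Qed.

Lemma eval2_repeat a b x n : eval2 G a b (repeat x n) =
  gpow (let z := if fst x then a else b in if snd x then z else inv z) n.
Proof. induction n as [|n IH]; simpl; auto. unfold eval2 in *. simpl. rewrite IH. auto. Qed.

Lemma free_pair_gpow_neq1 a b : free_pair G a b -> forall n, gpow a (S n) <> one.
Proof.
  intros F n E. apply (F (repeat (true, true) (S n))).
  - discriminate.
  - rewrite <- app_nil_r. apply reduced2_repeat_app; simpl; auto.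
  - rewrite eval2_repeat. exact E.
Qed.

Lemma free_pair_gpow_noncommuting a b : free_pair G a b -> forall m s,
  gpow b (S m) ** gpow a (S s) <> gpow a (S s) ** gpow b (S m).
Proof.
  intros F m s E.
  apply (F (repeat (false, true) (S m) ++ repeat (true, true) (S s) ++
            repeat (false, false) (S m) ++ repeat (true, false) (S s))).
  - destruct m; discriminate.
  - do 3 (apply reduced2_repeat_app;
      [| simpl; unfold letters_compatible; simpl; intuition discriminate]).
    rewrite <- app_nil_r. apply reduced2_repeat_app; simpl; auto.
  - rewrite !eval2_app, !eval2_repeat. cbn [fst snd].
    rewrite !gpowV, !mulgA, E, <- (mulgA (gpow a (S s))), mulgV, mulg1, mulgV.
    reflexivity.
Qed.

Lemma conjg_mul h a b : (h ** a ** inv h) ** (h ** b ** inv h) = h ** (a ** b) ** inv h.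
Proof. rewrite <- !mulgA, mulKg. reflexivity. Qed.

Lemma conjg_inv h a : inv (h ** a ** inv h) = h ** inv a ** inv h.
Proof. rewrite !invgM, invgK, mulgA. reflexivity. Qed.

Lemma conjg_inj h a b : h ** a ** inv h = h ** b ** inv h -> a = b.
Proof. intros E. apply mulIg, mulgI in E. exact E. Qed.

Lemma free_pair_conj_noncommuting a b h k : free_pair G a b -> forall s n d, (1 <= d)%nat ->
  gpow (signed (h ** gpow a (S k) ** inv h) s) (S n) ** gpow (h ** b ** inv h) d <>
  gpow (h ** b ** inv h) d ** gpow (signed (h ** gpow a (S k) ** inv h) s) (S n).
Proof.
  intros F s n d Hd.
  assert (Hpos : gpow (h ** gpow a (S k) ** inv h) (S n) ** gpow (h ** b ** inv h) d <>
                 gpow (h ** b ** inv h) d ** gpow (h ** gpow a (S k) ** inv h) (S n)).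
  { rewrite !gpowJ, !conjg_mul. intros E. apply conjg_inj in E.
    rewrite <- gpowM in E.
    replace (S k * S n)%nat with (S (k + n + k * n)) in E by lia.
    replace d with (S (d - 1)) in E by lia.
    exact (free_pair_gpow_noncommuting a b F (d - 1) (k + n + k * n) (eq_sym E)). }
  destruct s; cbn [signed]; [exact Hpos|].
  rewrite gpowV. intros E. apply Hpos, commute_invl, E.
Qed.

(** * Word length and translation length *)

Variable gens : list G.
Hypothesis gens_generate : generates gens.
Local Notation wl := (word_length gens).
Local Notation tl := (transl_length gens).

Lemma word_length_spec g :
  is_least (fun n => exists w, is_word G gens w /\ length w = n /\ wprod G w = g) (wl g).
Proof.
  unfold word_length. apply epsilon_spec, is_least_exists.
  destruct (gens_generate g) as [w [Hw Eg]]. exists (length w), w. auto.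
Qed.

Lemma geodesic_word g : exists w, is_word G gens w /\ length w = wl g /\ wprod G w = g.
Proof. apply (proj1 (word_length_spec g)). Qed.

Lemma word_length_le_word w : is_word G gens w -> (wl (wprod G w) <= length w)%nat.
Proof. intros H. apply (proj2 (word_length_spec (wprod G w))). exists w; auto. Qed.

Lemma word_length1 : wl one = 0%nat.
Proof.
  assert (H : (wl (wprod G nil) <= 0)%nat) by (apply word_length_le_word; constructor).
  simpl in H. lia.
Qed.

Lemma word_length_mul x y : (wl (x ** y) <= wl x + wl y)%nat.
Proof.
  destruct (geodesic_word x) as [w1 [W1 [<- <-]]].
  destruct (geodesic_word y) as [w2 [W2 [<- <-]]].
  rewrite <- wprod_app, <- length_app. apply word_length_le_word, Forall_app. auto.
Qed.

Lemma word_length_inv_le x : (wl (inv x) <= wl x)%nat.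
Proof.
  destruct (geodesic_word x) as [w [W [<- <-]]].
  assert (E : wprod G (rev (map inv w)) = inv (wprod G w)).
  { clear W. induction w as [|z w IH]; simpl; [rewrite invg1; reflexivity|].
    rewrite wprod_app, IH. simpl. rewrite mulg1, invgM. reflexivity. }
  rewrite <- E, <- (length_map inv w), <- length_rev. apply word_length_le_word.
  apply Forall_rev, Forall_map. eapply Forall_impl; [| exact W].
  intros z [Hz|Hz]; [right; rewrite invgK | left]; exact Hz.
Qed.

Lemma word_length_inv x : wl (inv x) = wl x.
Proof.
  apply Nat.le_antisymm; [|rewrite <- (invgK x) at 1]; apply word_length_inv_le.
Qed.

Lemma word_length_conj_le h g : (wl (h ** g ** inv h) <= wl h + wl g + wl h)%nat.
Proof.
  assert (H1 := word_length_mul (h ** g) (inv h)). assert (H2 := word_length_mul h g).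
  rewrite word_length_inv in H1. lia.
Qed.

Lemma word_length_gpow z m : (wl (gpow z m) <= m * wl z)%nat.
Proof.
  induction m as [|m IH]; simpl; [rewrite word_length1; lia|].
  assert (H := word_length_mul z (gpow z m)). lia.
Qed.

Lemma word_length_split g k : (k <= wl g)%nat ->
  exists r, wl r = k /\ wl (inv r ** g) = (wl g - k)%nat.
Proof.
  intros Hk. destruct (geodesic_word g) as [w [W [Lw <-]]].
  exists (wprod G (firstn k w)).
  rewrite <- (firstn_skipn k w) in W. apply Forall_app in W as [W1 W2].
  assert (E : inv (wprod G (firstn k w)) ** wprod G w = wprod G (skipn k w)).
  { rewrite <- (firstn_skipn k w) at 2. rewrite wprod_app, mulKg. reflexivity. }
  rewrite E.
  assert (H1 := word_length_le_word _ W1). assert (H2 := word_length_le_word _ W2).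
  rewrite length_firstn in H1. rewrite length_skipn in H2.
  assert (H3 := word_length_mul (wprod G (firstn k w)) (wprod G (skipn k w))).
  rewrite <- wprod_app, firstn_skipn in H3. lia.
Qed.

Fixpoint words_upto (n : nat) : list (list G) :=
  match n with
  | 0 => nil :: nil
  | S n => nil :: flat_map (fun s => map (cons s) (words_upto n)) (gens ++ map inv gens)
  end.

Lemma in_words_upto n w : is_word G gens w -> (length w <= n)%nat -> In w (words_upto n).
Proof.
  revert w; induction n as [|n IH]; intros w Hw Hl.
  - destruct w; simpl in *; [auto | lia].
  - destruct w as [|s w]; simpl; [auto|]. right.
    inversion Hw as [|? ? Hs Hw']; subst. apply in_flat_map. exists s. split.
    + apply in_or_app. destruct Hs; [left; auto | right].
      rewrite <- (invgK s). apply in_map. auto.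
    + apply in_map, IH; auto. simpl in Hl; lia.
Qed.

Definition ball r := map (wprod G) (words_upto r).

Lemma in_ball g r : (wl g <= r)%nat -> In g (ball r).
Proof.
  intros H. destruct (geodesic_word g) as [w [W [Lw <-]]].
  apply in_map, in_words_upto; auto. lia.
Qed.

Lemma transl_length_spec g : is_least (fun n => exists h, wl (h ** g ** inv h) = n) (tl g).
Proof. unfold transl_length. apply epsilon_spec, is_least_exists. exists (wl (one ** g ** inv one)), one. auto. Qed.

Lemma transl_length_attained g : exists h, wl (h ** g ** inv h) = tl g.
Proof. apply (proj1 (transl_length_spec g)). Qed.

Lemma transl_length_le g h : (tl g <= wl (h ** g ** inv h))%nat.
Proof. apply (proj2 (transl_length_spec g)). exists h; auto. Qed.

Lemma transl_length_conj_le g h : (tl (h ** g ** inv h) <= tl g)%nat.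
Proof.
  destruct (transl_length_attained g) as [k <-].
  assert (E : k ** inv h ** (h ** g ** inv h) ** inv (k ** inv h) = k ** g ** inv k).
  { rewrite invgM, invgK, <- !mulgA, mulKg, (mulgA (inv h) h), mulVg, mul1g. reflexivity. }
  rewrite <- E. apply transl_length_le.
Qed.

Lemma transl_length_conj g h : tl (h ** g ** inv h) = tl g.
Proof.
  apply Nat.le_antisymm; [apply transl_length_conj_le|].
  assert (E : inv h ** (h ** g ** inv h) ** inv (inv h) = g).
  { rewrite invgK, mulgA, mulgKV, mulKg. reflexivity. }
  rewrite <- E at 1. apply transl_length_conj_le.
Qed.

Lemma word_length_signed y s : wl (signed y s) = wl y.
Proof. destruct s; [reflexivity | apply word_length_inv]. Qed.

Definition transl_max (a1 a2 g : G) : nat :=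
  Nat.max (tl g) (Nat.max (tl (a1 ** g)) (tl (a2 ** g))).

Lemma transl_max_conj h a1 a2 g :
  transl_max (h ** a1 ** inv h) (h ** a2 ** inv h) (h ** g ** inv h) = transl_max a1 a2 g.
Proof. unfold transl_max. rewrite !conjg_mul, !transl_length_conj. reflexivity. Qed.

Lemma transl_max_bound_conj h a1 a2 alpha :
  (forall g, wl g <= 3 * transl_max (h ** a1 ** inv h) (h ** a2 ** inv h) g + alpha)%nat ->
  forall g, (wl g <= 3 * transl_max a1 a2 g + (alpha + 2 * wl h))%nat.
Proof.
  intros Hbound g.
  assert (H := Hbound (h ** g ** inv h)). rewrite transl_max_conj in H.
  assert (Hg := word_length_conj_le (inv h) (h ** g ** inv h)).
  replace (inv h ** (h ** g ** inv h) ** inv (inv h)) with g in Hg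
    by (rewrite invgK, mulgA, mulgKV, mulKg; reflexivity).
  rewrite word_length_inv in Hg.
  lia.
Qed.

(** * Gromov products *)

Definition zdist (x y : G) : Z := Z.of_nat (wl (inv x ** y)).

(* Twice the Gromov product (x | y)_w, so that it takes integer values. *)
Definition gprod2 (w x y : G) : Z := (zdist w x + zdist w y - zdist x y)%Z.

Lemma zdist_sym x y : zdist x y = zdist y x.
Proof. unfold zdist. rewrite <- word_length_inv, invgM, invgK. reflexivity. Qed.

Lemma zdist_triangle x y z : (zdist x z <= zdist x y + zdist y z)%Z.
Proof.
  unfold zdist. assert (H := word_length_mul (inv x ** y) (inv y ** z)).
  rewrite <- mulgA, mulKVg in H. lia.
Qed.

Lemma zdist_translate h x y : zdist (h ** x) (h ** y) = zdist x y.
Proof. unfold zdist. rewrite invgM, <- mulgA, mulKg. reflexivity. Qed.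

Lemma zdist_refl x : zdist x x = 0%Z.
Proof. unfold zdist. rewrite mulVg, word_length1. reflexivity. Qed.

Lemma zdist1l x : zdist one x = Z.of_nat (wl x).
Proof. unfold zdist. rewrite invg1, mul1g. reflexivity. Qed.

Lemma zdist_mulr p g : zdist p (p ** g) = Z.of_nat (wl g).
Proof. unfold zdist. rewrite mulKg. reflexivity. Qed.

Lemma gprod2_translate h w x y : gprod2 (h ** w) (h ** x) (h ** y) = gprod2 w x y.
Proof. unfold gprod2. rewrite !zdist_translate. reflexivity. Qed.

Lemma gprod2_rebase w x y : gprod2 w x y = gprod2 one (inv w ** x) (inv w ** y).
Proof. rewrite <- (gprod2_translate (inv w)), mulVg. reflexivity. Qed.

Lemma gprod2_sym w x y : gprod2 w x y = gprod2 w y x.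
Proof. unfold gprod2. rewrite (zdist_sym x y). lia. Qed.

Lemma gprod2_add_swap x y z : (gprod2 x y z + gprod2 y x z = 2 * zdist x y)%Z.
Proof. unfold gprod2. rewrite (zdist_sym y x). lia. Qed.

Lemma gprod2_le w x y : (gprod2 w x y <= 2 * zdist w x)%Z.
Proof. unfold gprod2. assert (H := zdist_triangle w x y). lia. Qed.

Lemma gprod2_move_base p q x y : (gprod2 p x y <= gprod2 q x y + 2 * zdist p q)%Z.
Proof.
  unfold gprod2. assert (H1 := zdist_triangle p q x). assert (H2 := zdist_triangle p q y). lia.
Qed.

Lemma gprod2_move_r w x y y' : (gprod2 w x y <= gprod2 w x y' + 2 * zdist y y')%Z.
Proof.
  unfold gprod2. assert (H1 := zdist_triangle w y' y). assert (H2 := zdist_triangle x y y').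
  rewrite (zdist_sym y' y) in *. lia.
Qed.

Lemma gprod2_base_l w x : gprod2 w w x = 0%Z.
Proof. unfold gprod2. rewrite zdist_refl. lia. Qed.

Lemma gprod2_base_r w x : gprod2 w x w = 0%Z.
Proof. rewrite gprod2_sym. apply gprod2_base_l. Qed.

Lemma gprod2_inv_square g : gprod2 one (inv g) g = (2 * Z.of_nat (wl g) - Z.of_nat (wl (g ** g)))%Z.
Proof.
  unfold gprod2. rewrite !zdist1l, word_length_inv. unfold zdist. rewrite invgK. lia.
Qed.

Lemma gprod2_mulr p g : gprod2 (p ** g) p (p ** g ** g) = gprod2 one (inv g) g.
Proof.
  rewrite gprod2_rebase, invgM, <- !mulgA, mulKg, mulKg, mulVg, mulg1. reflexivity.
Qed.

Lemma hyperbolic_int_const : hyperbolic_wrt gens -> exists D : nat, forall w x y z,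
  (gprod2 w x y <= gprod2 w x z + 2 * Z.of_nat D \/
   gprod2 w y z <= gprod2 w x z + 2 * Z.of_nat D)%Z.
Proof.
  intros [delta [Hd H]].
  destruct (archimed delta) as [Hup _].
  assert (Hup0 : (0 <= up delta)%Z) by (apply le_IZR; lra).
  exists (Z.to_nat (up delta)). intros w x y z. rewrite Z2Nat.id by exact Hup0.
  specialize (H w x y z). unfold gromov_prod, word_dist in H.
  assert (E : forall a b, INR (word_length gens (inv a ** b)) = IZR (zdist a b)).
  { intros a b. unfold zdist. apply INR_IZR_INZ. }
  rewrite !E in H. unfold gprod2.
  destruct (Z_le_gt_dec (zdist w x + zdist w y - zdist x y)
              (zdist w x + zdist w z - zdist x z + 2 * up delta)) as [Hle|B1]; [now left|].
  destruct (Z_le_gt_dec (zdist w y + zdist w z - zdist y z)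
              (zdist w x + zdist w z - zdist x z + 2 * up delta)) as [Hle|B2]; [now right|].
  exfalso. apply Z.gt_lt, IZR_lt in B1, B2.
  rewrite !plus_IZR, !minus_IZR, !mult_IZR, !plus_IZR in B1, B2.
  unfold Rmin in H. destruct (Rle_dec _ _); lra.
Qed.

(** * Consequences of the four-point condition *)

Section FourPoint.
Variable D : nat.
Local Notation ZD := (Z.of_nat D).
Local Notation P := gprod2.
Local Notation dz := zdist.
Hypothesis four_point : forall w x y z,
  (P w x y <= P w x z + 2 * ZD \/ P w y z <= P w x z + 2 * ZD)%Z.

Lemma gprod2_chain_step x0 y z w B :
  (P y x0 z <= B + 2 * ZD)%Z -> (P z y w <= B)%Z -> (2 * dz y z > 2 * B + 4 * ZD)%Z ->
  (P z x0 w <= B + 2 * ZD)%Z.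
Proof.
  intros H1 H2 H3. assert (I := gprod2_add_swap z y x0).
  rewrite (gprod2_sym y z x0), (zdist_sym z y) in I.
  destruct (four_point z y x0 w); lia.
Qed.

Lemma gprod2_chain (x : nat -> G) B :
  (forall i, P (x (S i)) (x i) (x (S (S i))) <= B)%Z ->
  (forall i, 2 * dz (x i) (x (S i)) > 2 * B + 4 * ZD)%Z ->
  forall n, (P (x (S n)) (x 0%nat) (x (S (S n))) <= B + 2 * ZD)%Z.
Proof.
  intros H1 H2 n. induction n as [|n IH].
  - specialize (H1 0%nat). lia.
  - eapply gprod2_chain_step; eauto.
Qed.

Section PowerChain.
Variables (g : G) (B : Z).
Hypothesis small_gprod : (P one (inv g) g <= B)%Z.
Hypothesis long : (2 * Z.of_nat (wl g) > 2 * B + 4 * ZD)%Z.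

Lemma gpow_chain_gprod2 n : (P (gpow g (S n)) one (gpow g (S (S n))) <= B + 2 * ZD)%Z.
Proof.
  apply (gprod2_chain (gpow g)); intros i.
  - rewrite (gpowSr g (S i)), (gpowSr g i), gprod2_mulr. exact small_gprod.
  - rewrite gpowSr, zdist_mulr. exact long.
Qed.

Lemma gpow_chain_length n :
  (Z.of_nat (wl (gpow g (S n))) >= Z.of_nat (S n) * Z.of_nat (wl g) - Z.of_nat n * (B + 2 * ZD))%Z.
Proof.
  induction n as [|n IH].
  - rewrite gpow1. lia.
  - assert (H := gpow_chain_gprod2 n).
    unfold gprod2 in H. rewrite (gpowSr g (S n)), zdist_mulr, zdist_sym, !zdist1l in H.
    rewrite (gpowSr g (S n)). lia.
Qed.

End PowerChain.

Lemma word_length_square_le g :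
  (Z.of_nat (wl (g ** g)) <= Z.of_nat (wl g) + Z.of_nat (tl g) + 2 * ZD)%Z.
Proof.
  destruct (Z_le_gt_dec (Z.of_nat (wl (g ** g))) (Z.of_nat (wl g) + Z.of_nat (tl g) + 2 * ZD))
    as [Hle|Hgt]; [exact Hle | exfalso].
  destruct (transl_length_attained g) as [k Hk].
  set (n := (2 * wl k + tl g + 1)%nat).
  assert (Hlow := gpow_chain_length g (2 * Z.of_nat (wl g) - Z.of_nat (wl (g ** g)))
                    ltac:(rewrite gprod2_inv_square; lia) ltac:(lia) n).
  assert (Hup : (wl (gpow g (S n)) <= wl k + S n * tl g + wl k)%nat).
  { assert (E : gpow g (S n) = inv k ** gpow (k ** g ** inv k) (S n) ** inv (inv k)).
    { rewrite gpowJ, invgK, <- !mulgA, mulKg, mulVg, mulg1. reflexivity. }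
    rewrite E. assert (H1 := word_length_conj_le (inv k) (gpow (k ** g ** inv k) (S n))).
    assert (H2 := word_length_gpow (k ** g ** inv k) (S n)).
    rewrite word_length_inv in H1. rewrite Hk in H2. lia. }
  assert (Hn : (Z.of_nat n * (Z.of_nat (wl (g ** g)) - Z.of_nat (wl g) - 2 * ZD)
                >= Z.of_nat n * (Z.of_nat (tl g) + 1))%Z).
  { apply Z.le_ge, Z.mul_le_mono_nonneg_l; lia. }
  unfold n in *. nia.
Qed.

Lemma zdist_square_le p g : (dz p (g ** g ** p) <= dz p (g ** p) + Z.of_nat (tl g) + 2 * ZD)%Z.
Proof.
  assert (H := word_length_square_le (inv p ** g ** p)).
  replace (tl (inv p ** g ** p)) with (tl g) in H
    by (rewrite <- (transl_length_conj g (inv p)), invgK; reflexivity).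
  unfold zdist. rewrite !mulgA.
  replace (inv p ** g ** p ** (inv p ** g ** p)) with (inv p ** g ** g ** p) in H
    by (rewrite <- !mulgA, mulKVg; reflexivity).
  exact H.
Qed.

Lemma cyclically_minimal_square_ge y :
  (forall q, (wl y <= wl (q ** y ** inv q))%nat) -> (4 * D + 2 <= wl y)%nat ->
  (2 * Z.of_nat (wl y) <= Z.of_nat (wl (y ** y)) + 4 * ZD)%Z.
Proof.
  intros Hmin Hlong.
  destruct (word_length_split y (2 * D + 1) ltac:(lia)) as [p [Hp Hpy]].
  assert (Hconj := Hmin (inv p)). rewrite invgK in Hconj.
  assert (Hdpy : dz p y = Z.of_nat (wl y - (2 * D + 1))) by (unfold zdist; rewrite Hpy; reflexivity).
  assert (Hback : (P y p (y ** p) <= 0)%Z).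
  { unfold gprod2. rewrite zdist_mulr, zdist_sym, Hdpy, Hp.
    unfold zdist. rewrite mulgA. lia. }
  assert (Hfar : (P y one (y ** p) <= 2 * ZD)%Z).
  { destruct (four_point y p one (y ** p)) as [H|H]; [exfalso|lia].
    revert H. unfold gprod2 at 1.
    rewrite (zdist_sym y p), Hdpy, (zdist_sym y one), (zdist_sym p one), !zdist1l, Hp. lia. }
  rewrite gprod2_rebase, mulg1, mulKg in Hfar.
  destruct (four_point one (inv y) y p) as [H|H].
  - rewrite gprod2_inv_square in H. lia.
  - exfalso. revert H. unfold gprod2 at 1.
    rewrite !zdist1l, Hp, zdist_sym, Hdpy. lia.
Qed.

Lemma geodesic_midpoint p q : exists m,
  (dz p m + dz m q = dz p q /\ dz p m <= dz m q <= dz p m + 1)%Z.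
Proof.
  set (L := wl (inv p ** q)).
  assert (Hdiv := Nat.div_mod L 2 ltac:(lia)).
  assert (Hmod := Nat.mod_upper_bound L 2 ltac:(lia)).
  destruct (word_length_split (inv p ** q) (Nat.div L 2) ltac:(fold L; lia)) as [r [Hr Hrq]].
  exists (p ** r).
  assert (E : dz (p ** r) q = Z.of_nat (wl (inv r ** (inv p ** q)))).
  { unfold zdist. rewrite invgM, <- mulgA. reflexivity. }
  rewrite E, Hrq, zdist_mulr, Hr. unfold zdist. fold L. lia.
Qed.

Lemma zdist_segment_displacement p q m a e :
  (dz p m + dz m q = dz p q)%Z -> (dz p (a ** p) <= e)%Z -> (dz q (a ** q) <= e)%Z ->
  (dz m (a ** m) <= e + 2 * ZD)%Z.
Proof.
  intros Hseg Hp Hq.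
  assert (T1 := zdist_triangle p (a ** p) (a ** m)).
  assert (T2 := zdist_triangle q (a ** q) (a ** m)).
  rewrite zdist_translate in T1, T2.
  assert (s1 := zdist_sym m q). assert (s2 := zdist_sym m (a ** m)).
  destruct (four_point p m q (a ** m)); unfold gprod2 in *; lia.
Qed.

Lemma midpoint_displacement p m g :
  (dz p m + dz m (g ** p) = dz p (g ** p))%Z -> (dz p m <= dz m (g ** p) <= dz p m + 1)%Z ->
  (dz m (g ** m) <= Z.of_nat (tl g) + 6 * ZD + 1)%Z.
Proof.
  intros Hseg Hmid.
  assert (Hsq := zdist_square_le p g).
  assert (E1 := zdist_translate g p m).
  assert (E2 := zdist_translate g (g ** p) m). rewrite mulgA in E2.
  assert (E3 := zdist_translate g p (g ** p)). rewrite mulgA in E3.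
  assert (s1 := zdist_sym (g ** p) m). assert (s2 := zdist_sym (g ** p) p).
  assert (s3 := zdist_sym m p). assert (s4 := zdist_sym p (g ** m)).
  assert (s5 := zdist_sym (g ** g ** p) (g ** m)). assert (s6 := zdist_sym (g ** p) (g ** m)).
  assert (s7 := zdist_sym p (g ** g ** p)). assert (s8 := zdist_sym m (g ** m)).
  assert (F1 := four_point (g ** p) m p (g ** m)).
  assert (F2 := four_point (g ** p) p (g ** g ** p) (g ** m)).
  unfold gprod2 in F1, F2. lia.
Qed.

Lemma transl_length_gpow_unbounded a T :
  (forall n, gpow a (S n) <> one) -> exists k, (T < tl (gpow a (S k)))%nat.
Proof.
  intros Ha. apply NNPP. intros Hbounded.
  assert (HT : forall k, (tl (gpow a (S k)) <= T)%nat).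
  { intros k. apply Nat.nlt_ge. intros Hk. apply Hbounded. eauto. }
  destruct (powers_in_list_bounded_uniform (ball (T + 2 * D)) (ball (T + 6 * D + 1)))
    as [M HM].
  set (g := gpow a (S M)).
  destruct (transl_length_attained a) as [h Hh].
  set (p := inv h).
  assert (Hap : (dz p (a ** p) <= Z.of_nat T)%Z).
  { specialize (HT 0%nat). rewrite gpow1 in HT.
    unfold zdist, p. rewrite invgK, mulgA, Hh. lia. }
  assert (Hag : a ** g = g ** a) by apply gpow_commute.
  destruct (geodesic_midpoint p (g ** p)) as [m [Hseg Hmid]].
  assert (Hgm : (dz m (g ** m) <= Z.of_nat (T + 6 * D + 1))%Z).
  { assert (H := midpoint_displacement p m g Hseg Hmid). assert (H' := HT M). fold g in H'. lia. }
  assert (Ham : (dz m (a ** m) <= Z.of_nat (T + 2 * D))%Z).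
  { assert (Hagp : (dz (g ** p) (a ** (g ** p)) <= Z.of_nat T)%Z).
    { rewrite mulgA, Hag, <- mulgA, zdist_translate. exact Hap. }
    assert (H := zdist_segment_displacement p (g ** p) m a _ Hseg Hap Hagp). lia. }
  set (c := inv m ** a ** m).
  assert (Hc : forall n, gpow c (S n) <> one).
  { intros n E. apply (Ha n). unfold c in E. rewrite <- (invgK m) in E at 2.
    rewrite gpowJ, invgK in E. apply (mulgI (inv m)), (mulIg m).
    rewrite E, mulg1, mulVg. reflexivity. }
  assert (Hc_ball : In c (ball (T + 2 * D))).
  { apply in_ball. unfold zdist in Ham. unfold c. rewrite <- mulgA. lia. }
  assert (Hcg_ball : In (gpow c (S M)) (ball (T + 6 * D + 1))).
  { apply in_ball. unfold c. rewrite <- (invgK m) at 2. rewrite gpowJ, invgK.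
    fold g. unfold zdist in Hgm. rewrite <- mulgA. lia. }
  specialize (HM c Hc_ball Hc (S M) Hcg_ball). lia.
Qed.

Definition straight (y : G) : Prop :=
  (P one (inv y) y <= 4 * ZD)%Z /\ (8 * D + 3 <= wl y)%nat.

Lemma straight_inv y : straight y -> straight (inv y).
Proof.
  intros [Hgp Hlong]. split.
  - rewrite invgK, gprod2_sym. exact Hgp.
  - rewrite word_length_inv. exact Hlong.
Qed.

Lemma straight_signed y s : straight y -> straight (signed y s).
Proof. destruct s; [auto | apply straight_inv]. Qed.

Section Straight.
Variable y : G.
Hypothesis y_straight : straight y.

Lemma straight_long : (2 * Z.of_nat (wl y) > 2 * (4 * ZD) + 4 * ZD)%Z.
Proof. destruct y_straight. lia. Qed.

Lemma word_length_gpow_ge n : (S n <= wl (gpow y (S n)))%nat.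
Proof.
  assert (H := gpow_chain_length y (4 * ZD) (proj1 y_straight) straight_long n).
  destruct y_straight as [_ Hlong].
  assert (Z.of_nat (S n) * Z.of_nat (wl y) - Z.of_nat n * (4 * ZD + 2 * ZD)
          >= Z.of_nat (S n))%Z by (rewrite Nat2Z.inj_succ; nia).
  lia.
Qed.

Lemma gprod2_gpow_next n : (P (gpow y n) one (gpow y (S n)) <= 6 * ZD)%Z.
Proof.
  destruct n as [|n].
  - rewrite gprod2_base_l. lia.
  - assert (H := gpow_chain_gprod2 y (4 * ZD) (proj1 y_straight) straight_long n). lia.
Qed.

Lemma gprod2_gpow_prev n N : (S n <= N)%nat ->
  (P (gpow y (S n)) (gpow y N) (gpow y n) <= 6 * ZD)%Z.
Proof.
  intros HnN. destruct (Nat.eq_dec (S n) N) as [<-|HSn].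
  - rewrite gprod2_base_l. lia.
  - destruct (straight_inv y y_straight) as [Hgp _].
    assert (H := gpow_chain_gprod2 (inv y) (4 * ZD) Hgp
                   ltac:(rewrite word_length_inv; exact straight_long) (N - n - 2)).
    rewrite <- (gprod2_translate (gpow y N)), mulg1, !gpowV in H.
    replace (S (N - n - 2)) with (N - S n)%nat in H by lia.
    replace (S (N - S n)) with (N - n)%nat in H by lia.
    rewrite !gpow_mulV_sub in H by lia. lia.
Qed.

Lemma gprod2_gpow_le n N : (n <= N)%nat -> (P (gpow y n) one (gpow y N) <= 8 * ZD)%Z.
Proof.
  intros HnN. destruct (Nat.eq_dec n N) as [<-|Hne].
  { rewrite gprod2_base_r. lia. }
  assert (Hnext := gprod2_gpow_next n).
  assert (Hprev := gprod2_gpow_prev n N ltac:(lia)).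
  assert (Hswap := gprod2_add_swap (gpow y n) (gpow y (S n)) (gpow y N)).
  rewrite gprod2_sym in Hprev.
  assert (Hstep : dz (gpow y n) (gpow y (S n)) = Z.of_nat (wl y))
    by (rewrite gpowSr; apply zdist_mulr).
  destruct y_straight as [_ Hlong].
  assert (Hsym := gprod2_sym (gpow y n) (gpow y N) (gpow y (S n))).
  destruct (four_point (gpow y n) one (gpow y N) (gpow y (S n))); lia.
Qed.

Lemma conj_gpow_short u n N : (n <= N)%nat ->
  (2 * Z.of_nat (wl (gpow y n)) <= P one (gpow y N) (u ** gpow y N))%Z ->
  (wl (inv (gpow y n) ** u ** gpow y n) <= 3 * wl u + 12 * D)%nat.
Proof.
  intros HnN Hlarge.
  set (w := gpow y n) in *. set (v := gpow y N) in *.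
  assert (Hfellow := gprod2_gpow_le n N HnN). fold w v in Hfellow.
  assert (F1 := four_point one w v (u ** w)).
  assert (F2 := four_point one v (u ** v) (u ** w)).
  assert (Hbase := gprod2_move_base u one (u ** v) (u ** w)).
  rewrite zdist_sym, zdist1l in Hbase.
  assert (Htr : P u (u ** v) (u ** w) = P one v w)
    by (rewrite <- (gprod2_translate u one v w), mulg1; reflexivity).
  assert (Hswap := gprod2_add_swap one w v).
  assert (Hsym := gprod2_sym one v w).
  assert (Huw := word_length_mul u w).
  assert (Hd : P one w (u ** w) = (Z.of_nat (wl w) + Z.of_nat (wl (u ** w))
                                    - Z.of_nat (wl (inv w ** u ** w)))%Z).
  { unfold gprod2, zdist at 3. rewrite !zdist1l, mulgA. reflexivity. }
  rewrite zdist1l in Hswap.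
  lia.
Qed.

Lemma large_gprod2_commuting_power u U N : (wl u <= U)%nat ->
  (2 * Z.of_nat (wl y * length (ball (3 * U + 12 * D))) <= P one (gpow y N) (u ** gpow y N))%Z ->
  exists s, gpow y (S s) ** u = u ** gpow y (S s).
Proof.
  intros Hu Hlarge.
  set (nb := length (ball (3 * U + 12 * D))) in *.
  destruct y_straight as [_ Hlong].
  assert (HnbN : (nb <= N)%nat).
  { assert (H1 := gprod2_le one (gpow y N) (u ** gpow y N)).
    assert (H2 := word_length_gpow y N). rewrite zdist1l in H1. nia. }
  assert (Hin : forall n, (n <= nb)%nat -> In (inv (gpow y n) ** u ** gpow y n) (ball (3 * U + 12 * D))).
  { intros n Hn. apply in_ball.
    assert (H1 := word_length_gpow y n).
    assert (H2 := conj_gpow_short u n N ltac:(lia) ltac:(nia)). lia. }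
  destruct (pigeonhole _ _ _ Hin (le_n nb)) as [n1 [n2 [Hn E]]].
  exists (n2 - n1 - 1)%nat. replace (S (n2 - n1 - 1)) with (n2 - n1)%nat by lia.
  apply (conj_eq_commute (gpow y n1)).
  rewrite <- gpowD. replace (n2 - n1 + n1)%nat with n2 by lia. exact E.
Qed.

End Straight.

Lemma gprod2_two_large e v c c' R :
  (R <= P one e (c ** v))%Z -> (R <= P one e (c' ** v))%Z ->
  (R - 2 * ZD - 2 * Z.of_nat (wl c) <= P one v (inv c ** c' ** v))%Z.
Proof.
  intros H1 H2.
  assert (Hbase := gprod2_move_base one c (c ** v) (c' ** v)).
  rewrite zdist1l in Hbase.
  assert (Hrebase : P c (c ** v) (c' ** v) = P one v (inv c ** c' ** v))
    by (rewrite gprod2_rebase, mulKg, mulgA; reflexivity).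
  assert (Hsym := gprod2_sym one (c ** v) e).
  destruct (four_point one (c ** v) e (c' ** v)); lia.
Qed.

Lemma exists_transverse_gpow y x N : straight y ->
  (forall s n d, (1 <= d)%nat ->
     gpow (signed y s) (S n) ** gpow x d <> gpow x d ** gpow (signed y s) (S n)) ->
  exists j, (1 <= j <= 5)%nat /\ forall s1 s2,
    (P one (gpow (signed y s1) N) (gpow x j ** gpow (signed y s2) N) <
      2 * Z.of_nat (wl y * length (ball (3 * (4 * wl x) + 12 * D))) + 2 * ZD
      + 10 * Z.of_nat (wl x))%Z.
Proof.
  intros Hy Hnc.
  set (R := (2 * Z.of_nat (wl y * length (ball (3 * (4 * wl x) + 12 * D))) + 2 * ZD
             + 10 * Z.of_nat (wl x))%Z).
  set (bad := fun j (t : bool * bool) =>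
    (R <= P one (gpow (signed y (fst t)) N) (gpow x j ** gpow (signed y (snd t)) N))%Z).
  apply NNPP. intros Hnone.
  assert (Hbad : forall i, (i <= 4)%nat -> exists t, bad (S i) t).
  { intros i Hi. apply NNPP. intros Hno. apply Hnone. exists (S i). split; [lia|].
    intros s1 s2. apply Z.nle_gt. intros Hle. apply Hno. exists (s1, s2). exact Hle. }
  set (f := fun i => epsilon (inhabits (true, true)) (bad (S i))).
  assert (Hf : forall i, (i <= 4)%nat -> bad (S i) (f i)).
  { intros i Hi. apply epsilon_spec, Hbad, Hi. }
  assert (Hin : forall i, (i <= 4)%nat ->
    In (f i) ((true, true) :: (true, false) :: (false, true) :: (false, false) :: nil)).
  { intros i _. destruct (f i) as [[] []]; simpl; tauto. }
  destruct (pigeonhole f _ 4 Hin (le_n _)) as [i1 [i2 [Hi E]]].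
  assert (B1 := Hf i1 ltac:(lia)). assert (B2 := Hf i2 ltac:(lia)). rewrite <- E in B2.
  destruct (f i1) as [s1 s2]. unfold bad in B1, B2. cbn [fst snd] in B1, B2.
  assert (Htwo := gprod2_two_large _ _ _ _ _ B1 B2).
  rewrite (@gpowB x (S i1) (S i2)), mulKg in Htwo by lia.
  assert (Hc := word_length_gpow x (S i1)).
  assert (Hd := word_length_gpow x (S i2 - S i1)).
  destruct (large_gprod2_commuting_power (signed y s2) (straight_signed y s2 Hy)
              (gpow x (S i2 - S i1)) (4 * wl x) N ltac:(nia)) as [n Hn].
  { rewrite word_length_signed. unfold R in Htwo. nia. }
  exact (Hnc s2 n (S i2 - S i1)%nat ltac:(lia) Hn).
Qed.

Lemma word_length_le_transl_mul b g Pd :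
  (P one (inv b) g <= Pd)%Z -> (P one (inv g) b <= Pd)%Z ->
  (2 * Z.of_nat (wl b) > 2 * Pd + 4 * ZD)%Z -> (2 * Z.of_nat (wl g) > 2 * Pd + 4 * ZD)%Z ->
  (Z.of_nat (wl g) <= Z.of_nat (tl (b ** g)) + 3 * Pd + 6 * ZD)%Z.
Proof.
  intros H1 H2 Hb Hg.
  assert (p1 : P b one (b ** g) = P one (inv b) g)
    by (rewrite gprod2_rebase, mulg1, mulKg; reflexivity).
  assert (p2 : P (b ** g) b (b ** g ** b) = P one (inv g) b)
    by (rewrite gprod2_rebase, mulKg, invgM, <- mulgA, mulVg, mulg1; reflexivity).
  assert (p3 : P (b ** g ** b) (b ** g) (b ** g ** b ** g) = P one (inv b) g)
    by (rewrite gprod2_rebase, mulKg, invgM, <- mulgA, mulVg, mulg1; reflexivity).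
  assert (d1 := zdist_mulr b g). assert (d2 := zdist_mulr (b ** g) b).
  assert (d3 := zdist_mulr (b ** g ** b) g). assert (d0 := zdist1l b).
  assert (S1 : (P (b ** g) one (b ** g ** b) <= Pd + 2 * ZD)%Z)
    by (apply (gprod2_chain_step one b (b ** g) (b ** g ** b)); lia).
  assert (S2 : (P (b ** g ** b) one (b ** g ** b ** g) <= Pd + 2 * ZD)%Z)
    by (apply (gprod2_chain_step one (b ** g) (b ** g ** b) (b ** g ** b ** g)); lia).
  assert (S0 : (P b one (b ** g) <= Pd)%Z) by (rewrite p1; exact H1).
  unfold gprod2 in S0, S1, S2.
  rewrite (zdist_sym b one), (zdist_sym (b ** g) one), (zdist_sym (b ** g ** b) one),
    !zdist1l in *.
  assert (Hsq := word_length_square_le (b ** g)). rewrite mulgA in Hsq.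
  assert (Hbg := word_length_mul b g).
  lia.
Qed.

Lemma gprod2_dichotomy b g Pd : (Pd <= P one (inv g) g)%Z ->
  (P one (inv b) g <= Pd /\ P one (inv g) b <= Pd)%Z \/
  exists e, (e = b \/ e = inv b) /\ (Pd - 2 * ZD <= P one e g)%Z.
Proof.
  intros Hc.
  destruct (Z_le_gt_dec (P one (inv b) g) Pd) as [h1|h1];
    [| right; exists (inv b); split; [now right | lia]].
  destruct (Z_le_gt_dec (P one (inv g) b) Pd) as [h2|h2]; [now left|].
  right. exists b. split; [now left|].
  assert (Hsym := gprod2_sym one b (inv g)).
  destruct (four_point one b (inv g) g); lia.
Qed.

(* Unless g lies near its axis, g starts along at most one of the diverging directions
   b1^±1, b2^±1, and it is transverse to the other b_i. *)
Lemma word_length_le_transl_max b1 b2 (Q : nat) :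
  (forall e1 e2, (e1 = b1 \/ e1 = inv b1) -> (e2 = b2 \/ e2 = inv b2) ->
     (P one e1 e2 <= Z.of_nat Q)%Z) ->
  (Q + 6 * D + 1 < wl b1)%nat -> (Q + 6 * D + 1 < wl b2)%nat ->
  forall g, (wl g <= 3 * transl_max b1 b2 g + (5 * (Q + 4 * D + 1) + 8 * D))%nat.
Proof.
  intros HQ Hb1 Hb2 g.
  assert (M0 : (tl g <= transl_max b1 b2 g)%nat) by (unfold transl_max; lia).
  assert (M1 : (tl (b1 ** g) <= transl_max b1 b2 g)%nat) by (unfold transl_max; lia).
  assert (M2 : (tl (b2 ** g) <= transl_max b1 b2 g)%nat) by (unfold transl_max; lia).
  set (Pd := (Z.of_nat Q + 4 * ZD + 1)%Z).
  apply Nat2Z.inj_le. rewrite Nat2Z.inj_add, Nat2Z.inj_mul.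
  assert (Hsq := word_length_square_le g).
  assert (Hc := gprod2_inv_square g).
  destruct (Z_le_gt_dec (3 * P one (inv g) g) (2 * Z.of_nat (wl g))); [lia|].
  destruct (Z_le_gt_dec (Z.of_nat (wl g)) (2 * Pd + 2 * ZD)); [lia|].
  destruct (gprod2_dichotomy b1 g Pd ltac:(lia)) as [[G1 G1']|[e1 [He1 E1]]].
  { assert (H := word_length_le_transl_mul b1 g Pd G1 G1' ltac:(lia) ltac:(lia)). lia. }
  destruct (gprod2_dichotomy b2 g Pd ltac:(lia)) as [[G2 G2']|[e2 [He2 E2]]].
  { assert (H := word_length_le_transl_mul b2 g Pd G2 G2' ltac:(lia) ltac:(lia)). lia. }
  exfalso. assert (Hsym := gprod2_sym one g e2). assert (H := HQ e1 e2 He1 He2).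
  destruct (four_point one e1 g e2); lia.
Qed.

Lemma straight_transverse_pair_bound y x : straight y ->
  (forall s n d, (1 <= d)%nat ->
     gpow (signed y s) (S n) ** gpow x d <> gpow x d ** gpow (signed y s) (S n)) ->
  exists N j alpha, forall g,
    (wl g <= 3 * transl_max (gpow y N) (gpow x j ** gpow y N ** inv (gpow x j)) g + alpha)%nat.
Proof.
  intros Hy Hnc.
  set (U := wl x).
  set (R := (2 * (wl y * length (ball (3 * (4 * U) + 12 * D))) + 2 * D + 10 * U)%nat).
  set (Q := (R + 10 * U)%nat).
  set (N := (Q + 6 * D + 10 * U + 2)%nat).
  destruct (exists_transverse_gpow y x N Hy Hnc) as [j [Hj Htrans]].
  set (X := gpow x j).
  set (b1 := gpow y N). set (b2 := X ** b1 ** inv X).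
  assert (HX : (wl X <= 5 * U)%nat) by (assert (H := word_length_gpow x j); fold X U in H; nia).
  assert (Hb1 : (N <= wl b1)%nat).
  { unfold b1. replace N with (S (N - 1)) at 2 by lia.
    assert (H := word_length_gpow_ge y Hy (N - 1)). lia. }
  assert (Hb2 : (wl b1 <= wl X + wl b2 + wl X)%nat).
  { replace b1 with (inv X ** b2 ** inv (inv X))
      by (unfold b2; rewrite invgK, mulgA, mulgKV, mulKg; reflexivity).
    assert (H := word_length_conj_le (inv X) b2). rewrite word_length_inv in H. exact H. }
  assert (Hcross : forall e1 e2, (e1 = b1 \/ e1 = inv b1) -> (e2 = b2 \/ e2 = inv b2) ->
                     (P one e1 e2 <= Z.of_nat Q)%Z).
  { intros e1 e2 He1 He2.
    assert (Ee1 : exists s1, e1 = gpow (signed y s1) N).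
    { destruct He1 as [->| ->]; [exists true | exists false; cbn [signed]; rewrite gpowV];
        reflexivity. }
    assert (Ee2 : exists s2, e2 = X ** gpow (signed y s2) N ** inv X).
    { destruct He2 as [->| ->]; [exists true | exists false; cbn [signed]];
        [reflexivity | unfold b2; rewrite gpowV, !invgM, invgK, !mulgA; reflexivity]. }
    destruct Ee1 as [s1 ->], Ee2 as [s2 ->].
    assert (H := Htrans s1 s2). fold X U in H.
    assert (Hmove := gprod2_move_r one (gpow (signed y s1) N)
                       (X ** gpow (signed y s2) N ** inv X) (X ** gpow (signed y s2) N)).
    rewrite zdist_sym, zdist_mulr, word_length_inv in Hmove.
    unfold Q, R. lia. }
  exists N, j, (5 * (Q + 4 * D + 1) + 8 * D)%nat. intros g.
  apply (word_length_le_transl_max b1 b2); [exact Hcross | lia | lia].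
Qed.

Lemma straight_conjugate_gpow a : (forall n, gpow a (S n) <> one) ->
  exists k h, straight (h ** gpow a (S k) ** inv h).
Proof.
  intros Ha.
  destruct (transl_length_gpow_unbounded a (8 * D + 2) Ha) as [k Hk].
  destruct (transl_length_attained (gpow a (S k))) as [h Hh].
  exists k, h. set (y := h ** gpow a (S k) ** inv h) in *.
  assert (Hmin : forall q, (wl y <= wl (q ** y ** inv q))%nat).
  { intros q. rewrite Hh, <- (transl_length_conj (gpow a (S k)) h). apply transl_length_le. }
  assert (Hsq := cyclically_minimal_square_ge y Hmin ltac:(lia)).
  split; [rewrite gprod2_inv_square; lia | lia].
Qed.

Lemma free_subgroup_transl_max_bound (A : G -> Prop) : is_subgroup A -> contains_free_rank2 A ->
  exists alpha a1 a2, A a1 /\ A a2 /\ forall g, (wl g <= 3 * transl_max a1 a2 g + alpha)%nat.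
Proof.
  intros HA [a [b [Aa [Ab Hfree]]]].
  destruct (straight_conjugate_gpow a (free_pair_gpow_neq1 a b Hfree)) as [k [h Hy]].
  destruct (straight_transverse_pair_bound _ (h ** b ** inv h) Hy
              (free_pair_conj_noncommuting a b h k Hfree)) as [N [j [alpha Hbound]]].
  set (a1 := gpow (gpow a (S k)) N).
  set (a2 := gpow b j ** a1 ** inv (gpow b j)).
  exists (alpha + 2 * wl h)%nat, a1, a2.
  split; [|split].
  - apply subgroup_gpow; [exact HA|]. apply subgroup_gpow; assumption.
  - apply subgroup_conj; [exact HA | apply subgroup_gpow; assumption |].
    apply subgroup_gpow; [exact HA|]. apply subgroup_gpow; assumption.
  - apply transl_max_bound_conj. intros g.
    replace (h ** a1 ** inv h) with (gpow (h ** gpow a (S k) ** inv h) N)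
      by (unfold a1; apply gpowJ).
    replace (h ** a2 ** inv h) with
      (gpow (h ** b ** inv h) j ** gpow (h ** gpow a (S k) ** inv h) N
       ** inv (gpow (h ** b ** inv h) j))
      by (unfold a2, a1; rewrite !gpowJ, conjg_inv, !conjg_mul; reflexivity).
    apply Hbound.
Qed.

End FourPoint.
End HyperbolicGroup.

Lemma Rmax_INR m n : Rmax (INR m) (INR n) = INR (Nat.max m n).
Proof.
  unfold Rmax. destruct (Rle_dec (INR m) (INR n)) as [H|H].
  - apply INR_le in H. rewrite Nat.max_r; auto.
  - assert (n <= m)%nat by (apply INR_le; lra). rewrite Nat.max_l; auto.
Qed.

Open Scope R_scope.

Theorem mainTheorem11 (G : Grp) (S : list G) :
  generates S -> hyperbolic_wrt S ->
  forall A : G -> Prop, is_subgroup A -> contains_free_rank2 A ->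
  exists alpha : R, 0 <= alpha /\
  exists a1 a2 : G, A a1 /\ A a2 /\
  forall g : G,
    INR (word_length S g) <=
      3 * Rmax (INR (transl_length S g))
               (Rmax (INR (transl_length S (gmul a1 g)))
                     (INR (transl_length S (gmul a2 g)))) + alpha.
Proof.
  intros Hgen Hhyp A HA Hfree.
  destruct (hyperbolic_int_const S Hhyp) as [D Hfour].
  destruct (free_subgroup_transl_max_bound S Hgen D Hfour A HA Hfree)
    as [alpha [a1 [a2 [A1 [A2 Hbound]]]]].
  exists (INR alpha). split; [apply pos_INR|].
  exists a1, a2. split; [exact A1|]. split; [exact A2|]. intros g.
  rewrite !Rmax_INR. specialize (Hbound g). apply le_INR in Hbound.
  rewrite plus_INR, mult_INR in Hbound. simpl (INR 3) in Hbound.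
  unfold transl_max in Hbound. lra.
Qed.
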